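(* Let $d,r\ge2$. The subset $\mathcal P=\bigcap_{n\in S}\mathcal H_{W(n),-1}\subseteq(\mathcal M_{d,r})_{\mathbb R}$ is compact, and for every $i\in[r]$ its chart image $\pi_i(\mathcal P)\subseteq M^{(i)}_{d,r}\otimes\mathbb R$ is an integral (lattice) polytope. Consequently $\mathcal P$ is an integral PL polytope which is chart-Gorenstein–Fano.
   Context: The polyptych lattice $\mathcal M_{d,r}$ over $\mathbb Z$: coordinates $(\mathbf u,\mathbf w)\in\mathbb Z^d\times\mathbb Z^r$; charts $M^{(i)}_{d,r}=\{w_i=0\}$, $i\in[r]$; mutations $\mu_{i,i+1}(\mathbf u,\mathbf w)=(\mathbf u,w_1,\dots,w_{i-1},\min_ju_j-\sum_kw_k,0,w_{i+2},\dots,w_r)$, others by composition/inversion; $(\mathcal M_{d,r})_{\mathbb R}$ uses the same formulas on $\mathbb R$-coordinates, with chart maps $\pi_i$. $\mathbf 1$ is the all-ones vector, $\varepsilon_j$ standard basis vectors. $\mathbb M_{d,r}=\{(\mathbf u,\mathbf w):\min_ju_j=0\}$ is identified with elements via $\varphi_i(\mathbf u,\mathbf w)=(\mathbf u+\langle\mathbf 1,\mathbf w\rangle\mathbf 1,\mathbf w)$ with $i$-th $\mathbf w$-coordinate set to $0$; $\varphi_i^{-1}(\mathbf u,\mathbf w)=(\mathbf u-\min(\mathbf u)\mathbf 1,\mathbf w+(\min(\mathbf u)-\langle\mathbf 1,\mathbf w\rangle)\varepsilon_i)$, which makes sense over $\mathbb R$. $T_{d,r}=\{(\mathbf a,\mathbf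 b)\in\mathbb Z^d\times\mathbb Z^r:\sum_ja_j=\min_ib_i\}$; for $(\mathbf a,\mathbf b)\in T_{d,r}$ the point $f_{\mathbf a,\mathbf b}$ of $\mathcal M_{d,r}$ is given in chart $i$ (over $\mathbb R$) by $x\mapsto\langle\mathbf a,\mathbf u'\rangle+\langle\mathbf b,\mathbf w'\rangle$ where $(\mathbf u',\mathbf w')=\varphi_i^{-1}(x)$. The same constructions with $d,r$ swapped give $\mathcal M_{r,d}$, $\mathbb M_{r,d}$, charts $M^{(i)}_{r,d}$ (coordinates $(\mathbf y,\mathbf z)\in\mathbb Z^r\times\mathbb Z^d$, $z_i=0$), maps $\varphi_i$. For $n=(\mathbf y,\mathbf z)\in\mathbb M_{r,d}$ put $\mathsf v_{r,d}(n)=(\mathbf z,\mathbf y+\langle\mathbf 1,\mathbf z\rangle\mathbf 1)\in T_{d,r}$ and $W(n)=f_{\mathsf v_{r,d}(n)}$, a point of $\mathcal M_{d,r}$. PL half-space: $\mathcal H_{p,a}=\{m\in(\mathcal M_{d,r})_{\mathbb R}:p(m)\ge a\}$. Let $S^{(1)}\subseteq M^{(1)}_{r,d}$ be $\{(\varepsilon_1,\mathbf 0),\dots,(\varepsilon_r,\mathbf 0),\pm(\mathbf 1,\mathbf 0),\pm(\mathbf 1,\varepsilon_2),\dots,\pm(\mathbf 1,\varepsilon_d)\}$ (first component in $\mathbb Z^r$, second in $\mathbb Z^d$), and $S=\varphi_1^{-1}(S^{(1)})\subseteq\mathbb M_{r,d}$. A PL polytope is a compact finite intersection of PL half-spaces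 (with integer points and parameters); it is integral if every chart image is a lattice polytope; it is chart-Gorenstein–Fano if it is integral and of the form $\bigcap_i\mathcal H_{p_i,-1}$ with $p_i$ points. *)

From HB Require Import structures.
From mathcomp Require Import all_boot all_order all_algebra.
From mathcomp Require Import all_classical all_reals all_analysis.
Set Implicit Arguments. Unset Strict Implicit. Unset Printing Implicit Defensive.
Import Order.TTheory GRing.Theory Num.Theory.
Local Open Scope ring_scope.
Import numFieldNormedType.Exports.
Local Open Scope classical_set_scope.

Section Polyptych.
Variable R : realType.

(* Vectors of R^n are row vectors 'rV[R]_n; coordinates are 0-indexed,
   so the paper's index k in [n] is the nat k-1 here. *)

Definition eps (n k : nat) : 'rV[R]_n := \row_(j < n) ((j : nat) == k)%:R.
Definition ones (n : nat) : 'rV[R]_n := const_mx 1.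
Definition dotv (n : nat) (x y : 'rV[R]_n) : R := \sum_(j < n) x 0 j * y 0 j.

(* minimum of the coordinates of a vector (0 for the empty vector) *)
Definition vmin (n : nat) (u : 'rV[R]_n) : R :=
  oapp (fun j0 => \big[Num.min/u 0 j0]_(j < n) u 0 j) 0 [pick j : 'I_n].

Definition int_vec (n : nat) (x : 'rV[R]_n) : Prop :=
  forall j : 'I_n, x 0 j \is a Num.int.
Definition int_pt (p q : nat) (x : 'rV[R]_p * 'rV[R]_q) : Prop :=
  int_vec x.1 /\ int_vec x.2.

Definition zero_at (n k : nat) (w : 'rV[R]_n) : 'rV[R]_n :=
  \row_(j < n) (if (j : nat) == k then 0 else w 0 j).

Definition MM (p q : nat) : set ('rV[R]_p * 'rV[R]_q) :=
  [set x | vmin x.1 = 0].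

(* phi_i (chart index i, 0-indexed) and its inverse, generic in (p,q) so
   that they serve both M_{d,r} and M_{r,d} *)
Definition phi (p q : nat) (i : nat) (x : 'rV[R]_p * 'rV[R]_q)
  : 'rV[R]_p * 'rV[R]_q :=
  (x.1 + dotv (ones q) x.2 *: ones p, zero_at i x.2).
Definition phiinv (p q : nat) (i : nat) (x : 'rV[R]_p * 'rV[R]_q)
  : 'rV[R]_p * 'rV[R]_q :=
  (x.1 - vmin x.1 *: ones p, x.2 + (vmin x.1 - dotv (ones q) x.2) *: eps q i).

Definition inT (d r : nat) (ab : 'rV[R]_d * 'rV[R]_r) : Prop :=
  dotv (ones d) ab.1 = vmin ab.2.

Definition is_point (d r : nat) (ab : 'rV[R]_d * 'rV[R]_r) : Prop :=
  int_pt ab /\ inT ab.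

Definition fchart (d r : nat) (ab : 'rV[R]_d * 'rV[R]_r) (i : nat)
  (x : 'rV[R]_d * 'rV[R]_r) : R :=
  let y := phiinv i x in dotv ab.1 y.1 + dotv ab.2 y.2.

Definition fval (d r : nat) (ab : 'rV[R]_d * 'rV[R]_r)
  (m : 'rV[R]_d * 'rV[R]_r) : R := fchart ab 0 (phi 0 m).

Definition Hsp (d r : nat) (ab : 'rV[R]_d * 'rV[R]_r) (a : R)
  : set ('rV[R]_d * 'rV[R]_r) := [set m | MM m /\ a <= fval ab m].

Definition Hcap (d r : nat) (L : seq (('rV[R]_d * 'rV[R]_r) * R))
  : set ('rV[R]_d * 'rV[R]_r) :=
  [set m | MM m /\ forall pa, pa \in L -> Hsp pa.1 pa.2 m].

Definition vrd (r d : nat) (n : 'rV[R]_r * 'rV[R]_d) : 'rV[R]_d * 'rV[R]_r :=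
  (n.2, n.1 + dotv (ones d) n.2 *: ones r).

Definition S1 (r d : nat) : seq ('rV[R]_r * 'rV[R]_d) :=
  [seq (eps r k, 0) | k <- iota 0 r]
  ++ [:: (ones r, 0); (- ones r, 0)]
  ++ flatten [seq [:: (ones r, eps d j); (- ones r, - eps d j)]
             | j <- iota 1 d.-1].
Definition Sset (r d : nat) : seq ('rV[R]_r * 'rV[R]_d) :=
  map (phiinv 0) (S1 r d).

Definition Pset (d r : nat) : set ('rV[R]_d * 'rV[R]_r) :=
  Hcap [seq (vrd n, -1) | n <- Sset r d].

Definition conv (d r : nat) (s : seq ('rV[R]_d * 'rV[R]_r))
  : set ('rV[R]_d * 'rV[R]_r) :=
  [set x | exists l : 'I_(size s) -> R,
     (forall k, 0 <= l k) /\ \sum_k l k = 1 /\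
     x = (\sum_k l k *: (nth (0, 0) s k).1, \sum_k l k *: (nth (0, 0) s k).2)].

Definition lattice_polytope (d r : nat) (A : set ('rV[R]_d * 'rV[R]_r)) : Prop :=
  exists s : seq ('rV[R]_d * 'rV[R]_r),
    (forall x, x \in s -> int_pt x) /\ A = conv s.

Definition PL_polytope (d r : nat) (A : set ('rV[R]_d * 'rV[R]_r)) : Prop :=
  compact A /\
  exists L : seq (('rV[R]_d * 'rV[R]_r) * R),
    (forall pa, pa \in L -> is_point pa.1 /\ pa.2 \is a Num.int) /\
    A = Hcap L.

Definition integral_PL_polytope (d r : nat) (A : set ('rV[R]_d * 'rV[R]_r))
  : Prop :=
  PL_polytope A /\ forall i : 'I_r, lattice_polytope (phi i @` A).

Definition chart_GF (d r : nat) (A : set ('rV[R]_d * 'rV[R]_r)) : Prop :=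
  integral_PL_polytope A /\
  exists L : seq ('rV[R]_d * 'rV[R]_r),
    (forall p, p \in L -> is_point p) /\ A = Hcap [seq (p, -1) | p <- L].

End Polyptych.

(* In the model {min u = 0} the half-spaces H_{W(n),-1}, n in S, are the inequalities
   w_k >= -1 (from n = eps_k) and -1 <= u_j + sum w <= 1 (from +-(1, eps_j), resp. +-(1, 0)),
   so P is closed and bounded.  The chart map phi_i identifies P with
   C_i = {(v, w) : w_i = 0, v in [-1,1]^d, w >= -1, sum w <= min v + 1}, a convex set whose
   fibre over v is a simplex with vertices depending affinely on min v.  Shifting all
   coordinates of v lying strictly inside (-1, 1) by a common amount keeps min v affine, so
   induction on the number of such coordinates writes every point of C_i as a convex
   combination of the integral points (v, vertex) with v in {-1, 1}^d.  Hence every chart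
   image is a lattice polytope, and P, cut out by the integral points W(n) at level -1, is
   chart-Gorenstein-Fano. *)

From Pilot Require Import Defs.
From mathcomp Require Import all_boot all_order all_algebra.
From mathcomp Require Import all_classical all_reals all_analysis.
From mathcomp Require Import ring lra.
Import Order.TTheory GRing.Theory Num.Theory.
Local Open Scope ring_scope.
Import numFieldNormedType.Exports.
Local Open Scope classical_set_scope.
Set Implicit Arguments. Unset Strict Implicit. Unset Printing Implicit Defensive.

Section VectorFacts.
Variable R : realType.
Implicit Types (n : nat).

Lemma vmin_le n (u : 'rV[R]_n) (j : 'I_n) : vmin u <= u 0 j.
Proof.
rewrite /vmin; case: pickP => [j0 _|h]; last by have := h j.
exact: bigmin_le.
Qed.

Lemma vmin_attained n (u : 'rV[R]_n) : (0 < n)%N -> exists j : 'I_n, vmin u = u 0 j.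
Proof.
move=> n0; rewrite /vmin; case: pickP => [j0 _|h]; last by have := h (Ordinal n0).
apply: (@big_ind _ (fun y => exists j, y = u 0 j)) => [|x y [i ->] [k ->]|i _].
- by exists j0.
- by case: (leP (u 0 i) (u 0 k)) => _; [exists i|exists k].
- by exists i.
Qed.

Lemma vmin_geP n (u : 'rV[R]_n) c : (0 < n)%N ->
  (c <= vmin u) <-> (forall j, c <= u 0 j).
Proof.
move=> n0; split => [h j|h]; first exact: le_trans h (vmin_le _ _).
by have [j ->] := vmin_attained u n0.
Qed.

Lemma vmin_eq_lb n (u : 'rV[R]_n) c (j : 'I_n) :
  (forall k, c <= u 0 k) -> u 0 j = c -> vmin u = c.
Proof.
move=> lb uj; apply/eqP; rewrite eq_le -{1}uj vmin_le /=.
by apply/vmin_geP => //; apply: leq_ltn_trans (ltn_ord j).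
Qed.

Lemma vmin_addc n (u : 'rV[R]_n) c : (0 < n)%N ->
  vmin (u + c *: ones R n) = vmin u + c.
Proof.
move=> n0; have [j uj] := vmin_attained u n0.
apply: (@vmin_eq_lb _ _ _ j) => [k|]; rewrite /ones !mxE mulr1; last by rewrite uj.
by rewrite lerD2r vmin_le.
Qed.

Lemma vmin_int n (u : 'rV[R]_n) : (0 < n)%N -> int_vec u -> vmin u \is a Num.int.
Proof. by move=> n0 uint; have [j ->] := vmin_attained u n0. Qed.

Lemma vmin_eps n k : (1 < n)%N -> (k < n)%N -> vmin (eps R n k) = 0.
Proof.
move=> n1 kn; have n0 : (0 < n)%N by apply: ltn_trans n1.
pose j : 'I_n := if k == 0%N then Ordinal n1 else Ordinal n0.
apply: (@vmin_eq_lb _ _ _ j) => [l|]; rewrite /eps mxE; first by rewrite ler0n.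
by rewrite /j; case: (k =P 0%N) => [->|/eqP k0] //=; rewrite eq_sym (negbTE k0).
Qed.

Lemma vmin_ones n : (0 < n)%N -> vmin (ones R n) = 1.
Proof. by move=> n0; apply: (@vmin_eq_lb _ _ _ (Ordinal n0)) => [l|]; rewrite mxE. Qed.

Lemma vmin_Nones n : (0 < n)%N -> vmin (- ones R n) = -1.
Proof. by move=> n0; apply: (@vmin_eq_lb _ _ _ (Ordinal n0)) => [l|]; rewrite !mxE. Qed.

Lemma dotv_ones_l n (x : 'rV[R]_n) : dotv (ones R n) x = \sum_j x 0 j.
Proof. by apply: eq_bigr => j _; rewrite mxE mul1r. Qed.

Lemma dotv_eps_l n (x : 'rV[R]_n) (j : 'I_n) : dotv (eps R n j) x = x 0 j.
Proof.
rewrite /dotv (bigD1 j) //= big1 => [|k kj]; rewrite mxE.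
  by rewrite eqxx mul1r addr0.
by rewrite (negbTE (kj : (k : nat) != j)) mul0r.
Qed.

Lemma dotvC n (x y : 'rV[R]_n) : dotv x y = dotv y x.
Proof. by apply: eq_bigr => j _; rewrite mulrC. Qed.

Lemma dotvDr n (x y z : 'rV[R]_n) : dotv z (x + y) = dotv z x + dotv z y.
Proof. by rewrite /dotv -big_split; apply: eq_bigr => j _; rewrite mxE mulrDr. Qed.

Lemma dotvZr n (x y : 'rV[R]_n) c : dotv x (c *: y) = c * dotv x y.
Proof. by rewrite /dotv mulr_sumr; apply: eq_bigr => j _; rewrite mxE mulrCA. Qed.

Lemma dotvNr n (x y : 'rV[R]_n) : dotv x (- y) = - dotv x y.
Proof. by rewrite -scaleN1r dotvZr mulN1r. Qed.

Lemma dotvNl n (x y : 'rV[R]_n) : dotv (- x) y = - dotv x y.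
Proof. by rewrite dotvC dotvNr dotvC. Qed.

Lemma dotv0r n (y : 'rV[R]_n) : dotv y 0 = 0.
Proof. by rewrite /dotv big1 // => j _; rewrite mxE mulr0. Qed.

Lemma dotv_ones_eps n k : (k < n)%N -> dotv (ones R n) (eps R n k) = 1.
Proof. by move=> kn; rewrite dotvC (dotv_eps_l _ (Ordinal kn)) mxE. Qed.

Lemma dotv_ones_adjust n (w : 'rV[R]_n) a k : (k < n)%N ->
  dotv (ones R n) (w + (a - dotv (ones R n) w) *: eps R n k) = a.
Proof. by move=> kn; rewrite dotvDr dotvZr dotv_ones_eps // mulr1 addrCA subrr addr0. Qed.

Lemma sum_zero_at n (w : 'rV[R]_n) (i : 'I_n) :
  \sum_j zero_at i w 0 j = \sum_j w 0 j - w 0 i.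
Proof.
rewrite (bigD1 i) //= [in RHS](bigD1 i) //= mxE eqxx add0r addrAC subrr add0r.
by apply: eq_bigr => j ji; rewrite mxE (negbTE (ji : (j : nat) != i)).
Qed.

Lemma sum_mul_delta n (F : 'I_n -> R) (l : 'I_n) : \sum_k F k * (l == k)%:R = F l.
Proof.
rewrite (bigD1 l) //= eqxx mulr1 big1 ?addr0 // => k kl.
by rewrite eq_sym (negbTE kl) mulr0.
Qed.

Lemma sumr_neq1 n (i : 'I_n) : \sum_(k | k != i) (1 : R) = n%:R - 1.
Proof. by case: n i => [[]|n] // i; rewrite sumr_const cardC1 card_ord -natr1 addrK. Qed.

Lemma sum_scale_mxE (I : Type) (s : seq I) m n (c : I -> R) (A : I -> 'M[R]_(m, n)) a b :
  (\sum_(p <- s) c p *: A p) a b = \sum_(p <- s) c p * A p a b.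
Proof. by rewrite summxE; apply: eq_bigr => p _; rewrite mxE. Qed.

End VectorFacts.

Section Facets.
Variable R : realType.
Variables d r : nat.
Hypotheses (d0 : (0 < d)%N) (r1 : (1 < r)%N).
Let r0 : (0 < r)%N. Proof. exact: ltn_trans r1. Qed.
Local Notation PT := ('rV[R]_d * 'rV[R]_r)%type.

Lemma phiinv_phi0 (m : PT) : MM m -> phiinv 0 (phi 0 m) = m.
Proof.
case: m => u w /= hu; rewrite /phi /phiinv /= vmin_addc // hu add0r addrK.
congr pair; rewrite !dotv_ones_l (sum_zero_at w (Ordinal r0)) opprB addrCA subrr addr0.
apply/rowP => l; rewrite !mxE /=; case: eqP => [l0|_]; last by rewrite mulr0 addr0.
by rewrite mulr1 add0r; congr (w 0 _); apply: val_inj.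
Qed.

Lemma fval_MM (ab m : PT) : MM m -> fval ab m = dotv ab.1 m.1 + dotv ab.2 m.2.
Proof. by move=> Mm; rewrite /fval /fchart phiinv_phi0. Qed.

Lemma vrd_phiinv0 (y : 'rV[R]_r * 'rV[R]_d) :
  vrd (phiinv 0 y) = (y.2 + (vmin y.1 - dotv (ones R d) y.2) *: eps R d 0, y.1).
Proof. by rewrite /vrd /phiinv /= dotv_ones_adjust // subrK. Qed.

Lemma fval_vrd_phiinv0 (y : 'rV[R]_r * 'rV[R]_d) (m : PT) : MM m ->
  fval (vrd (phiinv 0 y)) m =
  dotv y.2 m.1 + (vmin y.1 - dotv (ones R d) y.2) * m.1 0 (Ordinal d0) + dotv y.1 m.2.
Proof.
move=> Mm; rewrite fval_MM // vrd_phiinv0 /= dotvC dotvDr dotvZr dotvC.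
by rewrite [dotv m.1 _]dotvC (_ : eps R d 0 = eps R d (Ordinal d0)) // dotv_eps_l.
Qed.

(* [+-(1, epsS j)] are the elements of S^(1) whose [W]-values are [+-(u_j + \sum w)]; for
   the first coordinate S^(1) has [+-(1, 0)] instead of [+-(1, eps_1)]. *)
Definition epsS (j : 'I_d) : 'rV[R]_d := if j == 0 :> nat then 0 else eps R d j.

Lemma fval_vrd_eps (k : 'I_r) (m : PT) : MM m -> fval (vrd (phiinv 0 (eps R r k, 0))) m = m.2 0 k.
Proof.
by move=> Mm; rewrite fval_vrd_phiinv0 //= dotvC !dotv0r vmin_eps // subrr mul0r !add0r dotv_eps_l.
Qed.

Lemma fval_vrd_ones (j : 'I_d) (m : PT) : MM m ->
  fval (vrd (phiinv 0 (ones R r, epsS j))) m = m.1 0 j + \sum_k m.2 0 k.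
Proof.
move=> Mm; rewrite fval_vrd_phiinv0 //= vmin_ones // /epsS.
case: eqP => [j0|/eqP j0].
  by rewrite dotvC !dotv0r subr0 mul1r add0r dotv_ones_l; congr (m.1 0 _ + _); apply: val_inj.
by rewrite dotv_ones_eps // subrr mul0r addr0 dotv_eps_l dotv_ones_l.
Qed.

Lemma fval_vrd_Nones (j : 'I_d) (m : PT) : MM m ->
  fval (vrd (phiinv 0 (- ones R r, - epsS j))) m = - (m.1 0 j + \sum_k m.2 0 k).
Proof.
move=> Mm; have := fval_vrd_ones j Mm.
rewrite !fval_vrd_phiinv0 //= vmin_ones // vmin_Nones // => <-.
by rewrite !dotvNl dotvNr; ring.
Qed.

Lemma S1_eps (k : 'I_r) : (eps R r k, 0) \in S1 R r d.
Proof. by rewrite mem_cat map_f // mem_iota add0n ltn_ord. Qed.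

Lemma S1_onesS (j : 'I_d) :
  ((ones R r, epsS j) \in S1 R r d) && ((- ones R r, - epsS j) \in S1 R r d).
Proof.
rewrite /epsS !mem_cat; case: eqP => [_|/eqP j0]; first by rewrite oppr0 !in_cons !eqxx /= !orbT.
have jS : (j : nat) \in iota 1 d.-1 by rewrite mem_iota add1n prednK // ltn_ord lt0n j0.
by apply/andP; split; apply/orP; right; apply/orP; right; apply/flatten_mapP;
  exists (nat_of_ord j); rewrite // !in_cons !eqxx /= ?orbT.
Qed.

Lemma S1P (y : 'rV[R]_r * 'rV[R]_d) : y \in S1 R r d ->
  [\/ exists k : 'I_r, y = (eps R r k, 0), exists j, y = (ones R r, epsS j)
    | exists j, y = (- ones R r, - epsS j)].
Proof.
rewrite !mem_cat => /orP [/mapP [k]|/orP [|/flatten_mapP [k]]].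
- by rewrite mem_iota add0n => /andP [_ kr] ->; apply: Or31; exists (Ordinal kr).
- rewrite !inE => /orP [] /eqP ->; [apply: Or32|apply: Or33]; exists (Ordinal d0);
    by rewrite /epsS eqxx ?oppr0.
- rewrite mem_iota add1n prednK // => /andP [k1 kd].
  have ek : epsS (Ordinal kd) = eps R d k by rewrite /epsS /= -[k == 0%N]negbK -lt0n k1.
  by rewrite !inE -ek => /orP [] /eqP ->; [apply: Or32|apply: Or33]; exists (Ordinal kd).
Qed.

Definition Pset_ineqs (m : PT) : Prop :=
  [/\ vmin m.1 = 0, (forall k, -1 <= m.2 0 k) &
      (forall j, -1 <= m.1 0 j + \sum_k m.2 0 k <= 1)].

Lemma PsetE : @Pset R d r = [set m | Pset_ineqs m].
Proof.
rewrite predeqE => m; split.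
- move=> [Mm vrd_ge].
  have {}vrd_ge y : y \in S1 R r d -> -1 <= fval (vrd (phiinv 0 y)) m.
    by move=> y1; have [] := vrd_ge (vrd (phiinv 0 y), -1); rewrite ?map_f.
  split => // [k|j]; first by rewrite -fval_vrd_eps // vrd_ge // S1_eps.
  have /andP [Sj SNj] := S1_onesS j.
  have := vrd_ge _ SNj; rewrite fval_vrd_Nones // lerNr opprK => le1.
  by have := vrd_ge _ Sj; rewrite fval_vrd_ones // => ge1; apply/andP.
- move=> [m0 wge hle]; split => // _ /mapP [_ /mapP [y y1 ->] ->]; split => //=.
  case: (S1P y1) => -[j ->]; first by rewrite fval_vrd_eps.
    by rewrite fval_vrd_ones //; case/andP: (hle j).
  by rewrite fval_vrd_Nones // lerNr opprK; case/andP: (hle j).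
Qed.

End Facets.

Section Continuity.
Variable R : realType.

Lemma continuous_sum (T : topologicalType) (I : Type) (s : seq I) (F : I -> T -> R^o) :
  (forall i, continuous (F i)) -> continuous (fun x => \sum_(i <- s) F i x).
Proof.
move=> Fc; elim: s => [|a s IH].
  by under eq_fun do rewrite big_nil; exact: cst_continuous.
by under eq_fun do rewrite big_cons; move=> x; apply: continuousD; [exact: Fc|exact: IH].
Qed.

Lemma continuous_bigmin (T : topologicalType) (I : Type) (s : seq I) (F : I -> T -> R^o)
  (G : T -> R^o) : continuous G -> (forall i, continuous (F i)) ->
  continuous (fun x => \big[Num.min/G x]_(i <- s) F i x).
Proof.
move=> Gc Fc; elim: s => [|a s IH]; first by under eq_fun do rewrite big_nil.
by under eq_fun do rewrite big_cons; move=> x; exact: continuous_min (Fc a x) (IH x).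
Qed.

Lemma continuous_vmin n : continuous (fun u : 'rV[R]_n => (vmin u : R^o)).
Proof.
rewrite /vmin; case: pickP => [j0 _|_ /=]; last exact: cst_continuous.
by apply: continuous_bigmin => [|i]; exact: coord_continuous.
Qed.

Variables (U V : topologicalType).

Lemma continuous_fst_comp (f : U -> R^o) : continuous f -> continuous (fun x : U * V => f x.1).
Proof. by move=> fc [x y]; apply: (@continuous_comp _ _ _ fst f); [exact: cvg_fst|exact: fc]. Qed.

Lemma continuous_snd_comp (f : V -> R^o) : continuous f -> continuous (fun x : U * V => f x.2).
Proof. by move=> fc [x y]; apply: (@continuous_comp _ _ _ snd f); [exact: cvg_snd|exact: fc]. Qed.

End Continuity.

Section Compactness.
Variable R : realType.
Variables d r : nat.
Hypotheses (d0 : (0 < d)%N) (r1 : (1 < r)%N).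
Local Notation PT := ('rV[R]_d * 'rV[R]_r)%type.

Lemma closed_Pset_ineqs : closed [set m : PT | Pset_ineqs m].
Proof.
pose h j (m : PT) : R^o := m.1 0 j + \sum_k m.2 0 k.
have hc j : continuous (h j).
  move=> m; apply: continuousD.
    apply: (continuous_fst_comp (f := fun u : 'rV[R]_d => (u 0 j : R^o))).
    exact: coord_continuous.
  apply: continuous_sum => k.
  by apply: (continuous_snd_comp (f := fun w : 'rV[R]_r => (w 0 k : R^o))); exact: coord_continuous.
have -> : [set m : PT | Pset_ineqs m] =
  (fun m : PT => (vmin m.1 : R^o)) @^-1` [set 0] `&`
  \bigcap_k ((fun m : PT => (m.2 0 k : R^o)) @^-1` [set x | -1 <= x]) `&`
  \bigcap_j (h j @^-1` [set x | -1 <= x] `&` h j @^-1` [set x | x <= 1]).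
  rewrite predeqE => m; split => [[m0 wge hle]|[[m0 wge] hle]].
    by split; [split|] => // j _; [exact: wge|case/andP: (hle j)].
  by split => // [k|j]; [exact: wge|case: (hle j I) => /= -> ->].
apply: closedI; first apply: closedI.
- apply: preimage_closed; last exact: closed_eq.
  by move=> m _; apply: continuous_fst_comp; exact: continuous_vmin.
- apply: closed_bigI => k _; apply: preimage_closed; last exact: closed_ge.
  move=> m _; apply: (continuous_snd_comp (f := fun w : 'rV[R]_r => (w 0 k : R^o))).
  exact: coord_continuous.
- apply: closed_bigI => j _; apply: closedI; apply: preimage_closed;
    by [move=> m _; exact: hc|exact: closed_ge|exact: closed_le].
Qed.

Lemma Pset_ineqs_bounded (m : PT) : Pset_ineqs m ->
  (forall j, -(r%:R) <= m.1 0 j <= r%:R) /\ (forall k, -(r%:R) <= m.2 0 k <= r%:R).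
Proof.
case: m => u w [/= u0 wge hle].
have [j0 uj0] := vmin_attained u d0.
have /andP [s1 s2] : -1 <= \sum_k w 0 k <= 1 by have := hle j0; rewrite -uj0 u0 add0r.
have r2 : 2 <= r%:R :> R by rewrite (ler_nat R 2 r).
split => [j|k].
  have /andP [_ ?] := hle j; have := vmin_le u j; rewrite u0 => ?.
  by apply/andP; split; lra.
have : w 0 k + 1 <= \sum_l (w 0 l + 1).
  rewrite (bigD1 k) //= lerDl; apply: sumr_ge0 => l _.
  by rewrite -lerBlDr sub0r.
rewrite big_split /= sumr_const card_ord => ?.
by move: (wge k) => ?; apply/andP; split; lra.
Qed.

Lemma compact_Pset : compact (@Pset R d r).
Proof.
rewrite PsetE //.
pose seg := `[-(r%:R), (r%:R : R)]%classic.
have box n := rV_compact (A := fun _ : 'I_n => seg) (fun=> @segment_compact R _ _).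
apply: subclosed_compact closed_Pset_ineqs (compact_setX (box d) (box r)) _.
move=> m /Pset_ineqs_bounded [u_bd w_bd].
by split => /= j; rewrite /seg /= in_itv /=; [exact: u_bd|exact: w_bd].
Qed.

End Compactness.

Section ConvexHull.
Variable R : realType.
Variables d r : nat.
Local Notation PT := ('rV[R]_d * 'rV[R]_r)%type.

Lemma conv_mem (s : seq PT) p : p \in s -> Defs.conv s p.
Proof.
move=> ps; pose k0 : 'I_(size s) := Ordinal (etrans (seq.index_mem p s) ps).
have delta n (F : 'I_(size s) -> 'rV[R]_n) : \sum_k ((k == k0)%:R : R) *: F k = F k0.
  by rewrite (bigD1 k0) //= eqxx scale1r big1 ?addr0 // => k /negbTE ->; rewrite scale0r.
exists (fun k => (k == k0)%:R); split => [k|]; first by rewrite ler0n.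
split; last by rewrite !delta nth_index // -surjective_pairing.
by rewrite (bigD1 k0) //= eqxx big1 ?addr0 // => k /negbTE ->.
Qed.

Lemma conv_comb (s : seq PT) (I : finType) (mu : I -> R) (y : I -> PT) :
  (forall t, 0 <= mu t) -> \sum_t mu t = 1 -> (forall t, Defs.conv s (y t)) ->
  Defs.conv s (\sum_t mu t *: (y t).1, \sum_t mu t *: (y t).2).
Proof.
move=> mu_ge0 mu_sum1 /choice [L hL].
exists (fun p => \sum_t mu t * L t p); split => [p|].
  by apply: sumr_ge0 => t _; apply: mulr_ge0 => //; case: (hL t).
split.
  rewrite exchange_big /= -[RHS]mu_sum1; apply: eq_bigr => t _.
  by rewrite -mulr_sumr; case: (hL t) => _ [-> _]; rewrite mulr1.
have [e1 e2] : (forall t, (y t).1 = \sum_p L t p *: (nth (0, 0) s p).1) /\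
               (forall t, (y t).2 = \sum_p L t p *: (nth (0, 0) s p).2).
  by split=> t; case: (hL t) => _ [_ ->].
congr pair; [under eq_bigr do rewrite e1 scaler_sumr|under eq_bigr do rewrite e2 scaler_sumr];
  by rewrite exchange_big /=; apply: eq_bigr => p _; rewrite scaler_suml;
     apply: eq_bigr => t _; rewrite scalerA.
Qed.

Lemma conv_segment (s : seq PT) (lam : R) (y z : PT) :
  0 <= lam <= 1 -> Defs.conv s y -> Defs.conv s z ->
  Defs.conv s (lam *: y.1 + (1 - lam) *: z.1, lam *: y.2 + (1 - lam) *: z.2).
Proof.
move=> /andP [lam0 lam1] sy sz.
have := @conv_comb s _ (fun t : bool => if t then lam else 1 - lam) (fun t => if t then y else z).
rewrite !big_bool /=; apply; [by case; rewrite ?subr_ge0|lra|by case].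
Qed.

End ConvexHull.

Section ChartImage.
Variable R : realType.
Variables d r : nat.
Hypotheses (d0 : (0 < d)%N) (r1 : (1 < r)%N).
Local Notation PT := ('rV[R]_d * 'rV[R]_r)%type.
Variable i : 'I_r.

Definition cube (v : 'rV[R]_d) : Prop := forall j, -1 <= v 0 j <= 1.

Definition chart_ineqs (x : PT) : Prop :=
  [/\ x.2 0 i = 0, cube x.1, (forall k, -1 <= x.2 0 k) & -1 <= vmin x.1 - \sum_k x.2 0 k].

Lemma phi_PsetE : phi i @` (@Pset R d r) = [set x | chart_ineqs x].
Proof.
rewrite PsetE // predeqE => x; split.
- case=> -[u w] [/= u0 wge hle] <-; rewrite /phi; split => /=.
  + by rewrite mxE eqxx.
  + by move=> j; rewrite !mxE mulr1 dotv_ones_l; exact: hle.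
  + by move=> k; rewrite mxE; case: ifP => // _; rewrite lerN10.
  + by rewrite vmin_addc // u0 add0r dotv_ones_l sum_zero_at opprB addrCA subrr addr0.
- case: x => v w [/= wi0 v_cube wge vmin_ge].
  have sum_w' := dotv_ones_adjust w (vmin v) (ltn_ord i).
  have w'E : zero_at i (w + (vmin v - dotv (ones R r) w) *: eps R r i) = w.
    apply/rowP => l; rewrite !mxE; case: eqP => [li|/eqP li].
      by rewrite (_ : l = i) ?wi0 //; exact: val_inj.
    by rewrite mulr0 addr0.
  exists (phiinv i (v, w)); last by rewrite /phi /phiinv /= sum_w' subrK w'E.
  rewrite /phiinv; split => /=; first by rewrite -scaleNr vmin_addc // subrr.
  + move=> k; rewrite !mxE; case: eqP => [ki|_]; last by rewrite mulr0 addr0.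
    by rewrite mulr1 (_ : k = i) ?wi0 ?add0r ?dotv_ones_l //; exact: val_inj.
  + by move=> j; rewrite -dotv_ones_l sum_w' !mxE mulr1 subrK; exact: v_cube.
Qed.

Lemma chart_ineqs_conv (s : seq PT) x :
  (forall p, p \in s -> chart_ineqs p) -> Defs.conv s x -> chart_ineqs x.
Proof.
move=> s_ineqs [l [l_ge0 [l_sum1 ->]]].
have sP (p : 'I_(size s)) : chart_ineqs (nth (0, 0) s p) by apply: s_ineqs; apply: mem_nth.
have lb (F : 'I_(size s) -> R) c : (forall p, c <= F p) -> c <= \sum_p l p * F p.
  move=> F_ge; rewrite -[c]mul1r -l_sum1 mulr_suml.
  by apply: ler_sum => p _; apply: ler_wpM2l.
split => /=.
- by rewrite sum_scale_mxE big1 // => p _; case: (sP p) => -> _ _ _; rewrite mulr0.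
- move=> j; rewrite sum_scale_mxE; apply/andP; split.
    by apply: lb => p; case: (sP p) => _ /(_ j) /andP [].
  rewrite -lerN2 -sumrN; under eq_bigr do rewrite -mulrN.
  by apply: lb => p; case: (sP p) => _ /(_ j) /andP [_]; rewrite lerN2.
- by move=> k; rewrite sum_scale_mxE; apply: lb => p; case: (sP p) => _ _ /(_ k).
- have vmin_ge : \sum_p l p * vmin (nth (0, 0) s p).1 <= vmin (\sum_p l p *: (nth (0, 0) s p).1).
    apply/vmin_geP => // j; rewrite sum_scale_mxE.
    by apply: ler_sum => p _; apply: ler_wpM2l => //; apply: vmin_le.
  have sumE : \sum_k (\sum_p l p *: (nth (0, 0) s p).2) 0 k =
              \sum_p l p * \sum_k (nth (0, 0) s p).2 0 k.
    under eq_bigr do rewrite sum_scale_mxE; rewrite exchange_big /=.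
    by apply: eq_bigr => p _; rewrite mulr_sumr.
  rewrite sumE; apply: le_trans (lerB vmin_ge (lexx _)); rewrite -sumrB.
  by under eq_bigr do rewrite -mulrBr; apply: lb => p; case: (sP p).
Qed.

End ChartImage.

Section ChartVertices.
Variable R : realType.
Variables d r : nat.
Hypotheses (d0 : (0 < d)%N) (r1 : (1 < r)%N).
Local Notation PT := ('rV[R]_d * 'rV[R]_r)%type.
Variable i : 'I_r.

Definition cube_vertex (b : {ffun 'I_d -> bool}) : 'rV[R]_d := \row_j (if b j then 1 else -1).

(* Vertex [k] of the simplex [{w | w_i = 0, w >= -1, \sum w <= a + 1}], the fibre of the
   chart image over any [v] with [vmin v = a]; the vertex [k = i] is [-1] off [i]. *)
Definition fiber_vertex (k : 'I_r) (a : R) : 'rV[R]_r :=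
  \row_l (if l == i then 0 else if l == k then a + r%:R - 1 else -1).

Definition chart_vertices : seq PT :=
  [seq (cube_vertex b, fiber_vertex k (vmin (cube_vertex b)))
  | b <- enum {ffun 'I_d -> bool}, k <- enum 'I_r].

Lemma fiber_vertexE k a l : l != i -> fiber_vertex k a 0 l = (a + r%:R) * (l == k)%:R - 1.
Proof. by move=> li; rewrite mxE (negbTE li); case: eqP => _; rewrite ?mulr1 ?mulr0 ?sub0r. Qed.

Lemma sum_fiber_vertex k a :
  \sum_l fiber_vertex k a 0 l = (k != i)%:R * (a + r%:R) - (r%:R - 1).
Proof.
rewrite (bigD1 i) //= mxE eqxx add0r.
under eq_bigr => l li do rewrite fiber_vertexE //.
rewrite sumrB sumr_neq1 -mulr_sumr mulrC; congr (_ * _ - _).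
case: eqVneq => [->|ki]; first by rewrite big1 // => l /negbTE ->.
by rewrite (bigD1 k) //= eqxx big1 ?addr0 // => l /andP [_ /negbTE ->].
Qed.

Lemma fiber_vertex_comb k a b lam :
  lam *: fiber_vertex k a + (1 - lam) *: fiber_vertex k b =
  fiber_vertex k (lam * a + (1 - lam) * b).
Proof. by apply/rowP => l; rewrite !mxE; case: eqP => _; [|case: eqP => _]; ring. Qed.

Lemma cube_vertex_cube b : cube (cube_vertex b).
Proof. by move=> j; rewrite mxE; case: (b j); apply/andP; split; lra. Qed.

Lemma chart_ineqs_vertex (v : 'rV[R]_d) k : cube v -> chart_ineqs i (v, fiber_vertex k (vmin v)).
Proof.
move=> v_cube; have vmin_ge : -1 <= vmin v by apply/vmin_geP => // j; case/andP: (v_cube j).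
have r2 : 2 <= r%:R :> R by rewrite (ler_nat R 2 r).
split => //=; first by rewrite mxE eqxx.
  by move=> l; rewrite mxE; case: eqP => _; [|case: eqP => _]; lra.
by rewrite sum_fiber_vertex; case: (k != i); rewrite /= ?mul1r ?mul0r; lra.
Qed.

Lemma int_pt_chart_vertex b k : int_pt (cube_vertex b, fiber_vertex k (vmin (cube_vertex b))).
Proof.
have cv_int : int_vec (cube_vertex b) by move=> j; rewrite mxE; case: (b j); rewrite ?rpredN rpred1.
split => //= l; rewrite mxE; case: eqP => _ //; case: eqP => _; last by rewrite rpredN rpred1.
by rewrite rpredB ?rpredD ?rpred1 ?rpred_nat ?vmin_int.
Qed.

Lemma chart_vertices_ineqs_int p : p \in chart_vertices -> chart_ineqs i p /\ int_pt p.
Proof.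
case/allpairsP => -[b k] [_ _ ->]; split; last exact: int_pt_chart_vertex.
exact/chart_ineqs_vertex/cube_vertex_cube.
Qed.

Definition interior (v : 'rV[R]_d) : pred 'I_d := [pred j | -1 < v 0 j < 1].

Definition shift_interior (v : 'rV[R]_d) (t : R) : 'rV[R]_d :=
  \row_j (if interior v j then v 0 j + t else v 0 j).

Definition shift_admissible (v : 'rV[R]_d) (t : R) : Prop :=
  forall j, interior v j -> -1 <= v 0 j + t <= 1.

Lemma shift_interior_comb v s t lam : lam * s + (1 - lam) * t = 0 ->
  lam *: shift_interior v s + (1 - lam) *: shift_interior v t = v.
Proof.
move=> st0; apply/rowP => j; rewrite !mxE; case: ifP => _; last by ring.
by transitivity (v 0 j + (lam * s + (1 - lam) * t)); [ring|rewrite st0 addr0].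
Qed.

Lemma cube_shift_interior v t : cube v -> shift_admissible v t -> cube (shift_interior v t).
Proof. by move=> v_cube t_adm j; rewrite mxE; case: ifP => [/t_adm|]. Qed.

Lemma card_interior_shift v t j : interior v j -> ~~ interior (shift_interior v t) j ->
  (#|interior (shift_interior v t)| < #|interior v|)%N.
Proof.
move=> jv js; apply/proper_card/properP; split; last by exists j.
by apply/fintype.subsetP => l; rewrite !inE mxE; case: ifP => [lv _|_ lv]; exact: lv.
Qed.

(* [c = 0] if some coordinate of [v] is pinned at [-1], and [c = 1] otherwise, since then
   every coordinate outside the interior equals [1] and the minimum is interior. *)
Lemma vmin_shift_interior v j0 : cube v -> interior v j0 ->
  exists c : R, forall t, shift_admissible v t -> vmin (shift_interior v t) = vmin v + c * t.
Proof.
move=> v_cube j0v; case: (pickP [pred j | v 0 j == -1]) => [jm /eqP vjm|no_m1].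
  have jm_out : interior v jm = false by rewrite /interior /= vjm ltxx.
  have vmin_m1 u : cube u -> u 0 jm = -1 -> vmin u = -1.
    by move=> u_cube; apply: vmin_eq_lb => k; case/andP: (u_cube k).
  exists 0 => t t_adm; rewrite mul0r addr0 vmin_m1 ?vmin_m1 //.
    exact: cube_shift_interior.
  by rewrite mxE jm_out.
have [j2 j2v j2_min] := arg_minP (fun j => v 0 j) j0v.
have out_one j : ~~ interior v j -> v 0 j = 1.
  have /negbT vj_m1 := no_m1 j; rewrite /interior /= negb_and -!leNgt.
  case/andP: (v_cube j) => vj_ge vj_le /orP [] vj; last by apply/le_anti; rewrite vj_le.
  by move: vj_m1; rewrite /= (@le_anti _ _ (v 0 j) (-1)) ?vj ?vj_ge ?eqxx.
have vmin_j2 t : shift_admissible v t -> vmin (shift_interior v t) = v 0 j2 + t.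
  move=> t_adm; apply: (vmin_eq_lb (j := j2)) => [k|]; last by rewrite mxE j2v.
  rewrite mxE; case: ifP => [kv|/negbT kv]; first by rewrite lerD2r j2_min.
  by rewrite (out_one k kv); case/andP: (t_adm _ j2v).
have shift0 : shift_interior v 0 = v by apply/rowP => j; rewrite mxE addr0; case: ifP.
exists 1 => t t_adm; rewrite mul1r vmin_j2 // -[in RHS]shift0 vmin_j2 ?addr0 // => j _.
by rewrite addr0.
Qed.

Lemma cube_vertex_conv v k : cube v -> interior v =1 pred0 ->
  Defs.conv chart_vertices (v, fiber_vertex k (vmin v)).
Proof.
move=> v_cube no_int; pose b := [ffun j => 0 < v 0 j].
suff -> : v = cube_vertex b by apply/conv_mem/allpairsP; exists (b, k); rewrite !mem_enum.
apply/rowP => j; rewrite !mxE ffunE; have := no_int j; rewrite /interior /=.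
by case/andP: (v_cube j) => ? ?; case: ifP => ? /negbT; rewrite negb_and -!leNgt => /orP [] ?;
  apply/le_anti/andP; split; lra.
Qed.

Lemma fiber_vertex_conv n v : (#|interior v| <= n)%N -> cube v ->
  forall k, Defs.conv chart_vertices (v, fiber_vertex k (vmin v)).
Proof.
elim: n v => [|n IH] v card_le v_cube k; case: (pickP (interior v)) => [j0 j0v|no_int];
  try exact: cube_vertex_conv.
  by move: card_le; rewrite leqn0 => /eqP/card0_eq/(_ j0)/negP/(_ j0v).
have [c vminE] := vmin_shift_interior v_cube j0v.
have [j1 j1v j1_max] := arg_maxP (fun j => v 0 j) j0v.
have [j2 j2v j2_min] := arg_minP (fun j => v 0 j) j0v.
have /andP [? ?] := j1v; have /andP [? ?] := j2v.
pose dp := 1 - v 0 j1; pose dm := v 0 j2 + 1.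
have dp_gt0 : 0 < dp by rewrite /dp; lra.
have dm_gt0 : 0 < dm by rewrite /dm; lra.
have dp_adm : shift_admissible v dp.
  by move=> j jv; move: (j1_max j jv) (jv) => /= ? /andP [? ?]; rewrite /dp; apply/andP; split; lra.
have dm_adm : shift_admissible v (- dm).
  by move=> j jv; move: (j2_min j jv) (jv) => /= ? /andP [? ?]; rewrite /dm; apply/andP; split; lra.
have IHshift t j : shift_admissible v t -> interior v j -> ~~ interior (shift_interior v t) j ->
    Defs.conv chart_vertices (shift_interior v t, fiber_vertex k (vmin (shift_interior v t))).
  move=> t_adm jv js; apply: IH; last exact: cube_shift_interior.
  by rewrite -ltnS; apply: leq_trans card_le; apply: card_interior_shift js.
pose lam := dm / (dp + dm).
have lam01 : 0 <= lam <= 1.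
  by apply/andP; split; rewrite /lam ?ler_pdivrMr ?mul1r ?divr_ge0 //; lra.
have comb0 : lam * dp + (1 - lam) * - dm = 0 by rewrite /lam; field; lra.
have := conv_segment lam01 (IHshift dp j1 dp_adm j1v _) (IHshift (- dm) j2 dm_adm j2v _).
rewrite /= shift_interior_comb // fiber_vertex_comb !vminE //.
have -> : lam * (vmin v + c * dp) + (1 - lam) * (vmin v + c * - dm) = vmin v.
  by transitivity (vmin v + c * (lam * dp + (1 - lam) * - dm)); [ring|rewrite comb0 mulr0 addr0].
apply.
  by rewrite /interior /= mxE j1v /dp addrC subrK ltxx andbF.
by rewrite /interior /= mxE j2v /dm opprD addrA subrr sub0r ltxx.
Qed.

Lemma chart_ineqs_in_conv x : chart_ineqs i x -> Defs.conv chart_vertices x.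
Proof.
case: x => v w [/= wi0 v_cube wge vmin_ge].
have vmin_ge1 : -1 <= vmin v by apply/vmin_geP => // j; case/andP: (v_cube j).
have r2 : 2 <= r%:R :> R by rewrite (ler_nat R 2 r).
pose G := vmin v + r%:R.
have G_gt0 : 0 < G by rewrite /G; lra.
pose mu k := if k == i then (vmin v + 1 - \sum_l w 0 l) / G else (w 0 k + 1) / G.
have mu_ge0 k : 0 <= mu k.
  by rewrite /mu; case: eqP => _; apply: divr_ge0; rewrite ?(ltW G_gt0) //; move: (wge k); lra.
have sum_w : \sum_(k | k != i) w 0 k = \sum_k w 0 k by rewrite [RHS](bigD1 i) //= wi0 add0r.
have mu_sum1 : \sum_k mu k = 1.
  rewrite (bigD1 i) //= /mu eqxx; under eq_bigr => k ki do rewrite (negbTE ki).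
  by rewrite -mulr_suml big_split /= sum_w sumr_neq1 /G; field; lra.
have := conv_comb mu_ge0 mu_sum1 (fun k => fiber_vertex_conv (leqnn _) v_cube k).
rewrite /= -scaler_suml mu_sum1 scale1r.
suff -> : \sum_k mu k *: fiber_vertex k (vmin v) = w by [].
apply/rowP => l; rewrite sum_scale_mxE; case: (eqVneq l i) => [->|li].
  by rewrite wi0 big1 // => k _; rewrite mxE eqxx mulr0.
under eq_bigr do rewrite fiber_vertexE // mulrBr mulr1 mulrCA.
rewrite sumrB mu_sum1 -mulr_sumr sum_mul_delta /mu (negbTE li) -/G.
by field; lra.
Qed.

Lemma lattice_polytope_phi_Pset : lattice_polytope (phi i @` @Pset R d r).
Proof.
exists chart_vertices; split; first by move=> x /chart_vertices_ineqs_int [].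
rewrite (phi_PsetE R d0 r1) predeqE => x; split; first exact: chart_ineqs_in_conv.
by apply: (chart_ineqs_conv d0) => p /chart_vertices_ineqs_int [].
Qed.

End ChartVertices.

Section Points.
Variable R : realType.
Variables d r : nat.
Hypotheses (d0 : (0 < d)%N) (r0 : (0 < r)%N).

Lemma is_point_vrd_phiinv0 (y : 'rV[R]_r * 'rV[R]_d) :
  int_pt y -> is_point (vrd (phiinv 0 y)).
Proof.
case=> y1_int y2_int; rewrite /is_point /inT vrd_phiinv0 //=; split.
  split=> //= j; rewrite !mxE; apply: rpredD => //; apply: rpredM; last exact: rpred_nat.
  by rewrite rpredB ?vmin_int // dotv_ones_l rpred_sum.
by rewrite dotv_ones_adjust.
Qed.

Lemma int_pt_S1 y : y \in S1 R r d -> int_pt y.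
Proof.
have eps_int n k : int_vec (eps R n k) by move=> j; rewrite mxE rpred_nat.
have ones_int n : int_vec (ones R n) by move=> j; rewrite mxE rpred1.
have opp_int n (x : 'rV[R]_n) : int_vec x -> int_vec (- x) by move=> x_int j; rewrite mxE rpredN.
have zero_int n : int_vec (0 : 'rV[R]_n) by move=> j; rewrite mxE rpred0.
have epsS_int (j : 'I_d) : int_vec (epsS R j) by rewrite /epsS; case: ifP.
by case/(S1P d0) => -[j ->]; split => /=; auto.
Qed.

Lemma is_point_vrd n : n \in Sset R r d -> is_point (vrd n).
Proof. by case/mapP => y /int_pt_S1 y_int ->; exact: is_point_vrd_phiinv0. Qed.

End Points.

Theorem mainTheorem18 (R : realType) (d r : nat) (hd : (2 <= d)%N) (hr : (2 <= r)%N) :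
  compact (@Pset R d r) /\
  (forall i : 'I_r, lattice_polytope (phi (R := R) i @` @Pset R d r)) /\
  integral_PL_polytope (@Pset R d r) /\
  chart_GF (@Pset R d r).
Proof.
have d0 : (0 < d)%N := ltnW hd.
have P_lattice i := lattice_polytope_phi_Pset R d0 hr i.
have vrd_points pa : pa \in [seq (vrd n, -1 : R) | n <- Sset R r d] ->
    is_point pa.1 /\ pa.2 \is a Num.int.
  by case/mapP => n /(is_point_vrd d0 (ltnW hr)) n_pt ->; rewrite rpredN rpred1.
have P_PL : PL_polytope (@Pset R d r).
  by split; [exact: compact_Pset d0 hr|exists [seq (vrd n, -1 : R) | n <- Sset R r d]].
do !split => //; first by case: P_PL.
exists [seq vrd n | n <- Sset R r d]; split; last by rewrite -map_comp.
by move=> _ /mapP [n /(is_point_vrd d0 (ltnW hr)) ? ->].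
Qed.
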